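(* Let $\mathcal{C}$ be a peircean bicategory and define $a;^\bullet b:=\neg(\neg a;\neg b)$. Then for all arrows $c:X\to Y$, $d:Y\to Z$, $e:Z\to W$: (1) $c;(d;^\bullet e)\le(c;d);^\bullet e$; and (2) $(c;^\bullet d);e\le c;^\bullet(d;e)$.
   Context: Composition $;$ in diagrammatic order. A cartesian bicategory is a poset-enriched symmetric monoidal category with, for each $X$, commutative comonoid $(\mathrm{copy}_X,\mathrm{disc}_X)$ and monoid $(\mathrm{cocopy}_X,\mathrm{codisc}_X)$ forming special Frobenius bimonoids, comonoid left adjoint to monoid, every arrow $c$ satisfying $c;\mathrm{copy}\le\mathrm{copy};(c\otimes c)$ and $c;\mathrm{disc}\le\mathrm{disc}$, with standard coherence. A map is an arrow $f$ with $f;\mathrm{copy}=\mathrm{copy};(f\otimes f)$ and $f;\mathrm{disc}=\mathrm{disc}$. A peircean bicategory is a cartesian bicategory whose homsets carry Boolean algebras (with the given order) such that $f;\neg c=\neg(f;c)$ for every map $f:X\to Y$ and arrow $c:Y\to Z$. *)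

(* Poset-enriched symmetric monoidal categories, cartesian
   bicategories and peircean bicategories, axiomatised directly.
   Composition [f >> g] is in diagrammatic order (f first). *)




Class SMCData (Ob : Type) (Hom : Ob -> Ob -> Type) := {
  hle : forall {X Y : Ob}, Hom X Y -> Hom X Y -> Prop;
  comp : forall {X Y Z : Ob}, Hom X Y -> Hom Y Z -> Hom X Z;
  idm : forall X : Ob, Hom X X;
  otens : Ob -> Ob -> Ob;
  htens : forall {X Y X' Y' : Ob}, Hom X Y -> Hom X' Y' -> Hom (otens X X') (otens Y Y');
  ounit : Ob;
  assoc : forall X Y Z : Ob, Hom (otens (otens X Y) Z) (otens X (otens Y Z));
  assocI : forall X Y Z : Ob, Hom (otens X (otens Y Z)) (otens (otens X Y) Z);
  lunit : forall X : Ob, Hom (otens ounit X) X;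
  lunitI : forall X : Ob, Hom X (otens ounit X);
  runit : forall X : Ob, Hom (otens X ounit) X;
  runitI : forall X : Ob, Hom X (otens X ounit);
  sym : forall X Y : Ob, Hom (otens X Y) (otens Y X)
}.

Notation "f ⊑ g" := (hle f g) (at level 70, no associativity).
Notation "f >> g" := (comp f g) (at level 40, left associativity).
Notation "f ** g" := (htens f g) (at level 33, left associativity).
Notation "X ⊗ Y" := (otens X Y) (at level 32, left associativity).

Class SMCLaws (Ob : Type) (Hom : Ob -> Ob -> Type) {S : SMCData Ob Hom} : Prop := {
  hle_refl : forall X Y (f : Hom X Y), f ⊑ f;
  hle_trans : forall X Y (f g h : Hom X Y), f ⊑ g -> g ⊑ h -> f ⊑ h;
  hle_antisym : forall X Y (f g : Hom X Y), f ⊑ g -> g ⊑ f -> f = g;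
  comp_mono : forall X Y Z (f f' : Hom X Y) (g g' : Hom Y Z),
      f ⊑ f' -> g ⊑ g' -> f >> g ⊑ f' >> g';
  htens_mono : forall X Y X' Y' (f f' : Hom X Y) (g g' : Hom X' Y'),
      f ⊑ f' -> g ⊑ g' -> f ** g ⊑ f' ** g';
  comp_assoc : forall X Y Z W (f : Hom X Y) (g : Hom Y Z) (h : Hom Z W),
      f >> g >> h = f >> (g >> h);
  comp_idl : forall X Y (f : Hom X Y), idm X >> f = f;
  comp_idr : forall X Y (f : Hom X Y), f >> idm Y = f;
  htens_id : forall X Y, idm X ** idm Y = idm (X ⊗ Y);
  htens_comp : forall X Y Z X' Y' Z' (f : Hom X Y) (g : Hom Y Z) (f' : Hom X' Y') (g' : Hom Y' Z'),
      (f >> g) ** (f' >> g') = (f ** f') >> (g ** g');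
  assoc_iso1 : forall X Y Z, assoc X Y Z >> assocI X Y Z = idm _;
  assoc_iso2 : forall X Y Z, assocI X Y Z >> assoc X Y Z = idm _;
  lunit_iso1 : forall X, lunit X >> lunitI X = idm _;
  lunit_iso2 : forall X, lunitI X >> lunit X = idm _;
  runit_iso1 : forall X, runit X >> runitI X = idm _;
  runit_iso2 : forall X, runitI X >> runit X = idm _;
  sym_inv : forall X Y, sym X Y >> sym Y X = idm _;
  assoc_nat : forall X Y Z X' Y' Z' (f : Hom X X') (g : Hom Y Y') (h : Hom Z Z'),
      f ** g ** h >> assoc X' Y' Z' = assoc X Y Z >> f ** (g ** h);
  lunit_nat : forall X Y (f : Hom X Y), idm ounit ** f >> lunit Y = lunit X >> f;
  runit_nat : forall X Y (f : Hom X Y), f ** idm ounit >> runit Y = runit X >> f;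
  sym_nat : forall X Y X' Y' (f : Hom X X') (g : Hom Y Y'),
      f ** g >> sym X' Y' = sym X Y >> g ** f;
  pentagon : forall W X Y Z,
      assoc (W ⊗ X) Y Z >> assoc W X (Y ⊗ Z)
      = assoc W X Y ** idm Z >> assoc W (X ⊗ Y) Z >> idm W ** assoc X Y Z;
  triangle : forall X Y, assoc X ounit Y >> idm X ** lunit Y = runit X ** idm Y;
  hexagon : forall X Y Z,
      assoc X Y Z >> sym X (Y ⊗ Z) >> assoc Y Z X
      = sym X Y ** idm Z >> assoc Y X Z >> idm Y ** sym X Z
}.

Definition exch {Ob Hom} {S : SMCData Ob Hom} (A B C D : Ob)
  : Hom ((A ⊗ B) ⊗ (C ⊗ D)) ((A ⊗ C) ⊗ (B ⊗ D)) :=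
  assoc A B (C ⊗ D) >> idm A ** assocI B C D >> idm A ** (sym B C ** idm D)
  >> idm A ** assoc C B D >> assocI A C (B ⊗ D).

Class CBData (Ob : Type) (Hom : Ob -> Ob -> Type) {S : SMCData Ob Hom} := {
  copy : forall X : Ob, Hom X (X ⊗ X);
  disc : forall X : Ob, Hom X ounit;
  cocopy : forall X : Ob, Hom (X ⊗ X) X;
  codisc : forall X : Ob, Hom ounit X
}.

Class CBLaws (Ob : Type) (Hom : Ob -> Ob -> Type)
  {S : SMCData Ob Hom} {B : CBData Ob Hom} : Prop := {
  cb_smc : SMCLaws Ob Hom;
  copy_counitl : forall X, copy X >> disc X ** idm X >> lunit X = idm X;
  copy_counitr : forall X, copy X >> idm X ** disc X >> runit X = idm X;
  copy_coassoc : forall X, copy X >> copy X ** idm X >> assoc X X X = copy X >> idm X ** copy X;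
  copy_cocomm : forall X, copy X >> sym X X = copy X;
  cocopy_unitl : forall X, lunitI X >> codisc X ** idm X >> cocopy X = idm X;
  cocopy_unitr : forall X, runitI X >> idm X ** codisc X >> cocopy X = idm X;
  cocopy_assoc : forall X, cocopy X ** idm X >> cocopy X = assoc X X X >> idm X ** cocopy X >> cocopy X;
  cocopy_comm : forall X, sym X X >> cocopy X = cocopy X;
  frob_l : forall X, copy X ** idm X >> assoc X X X >> idm X ** cocopy X = cocopy X >> copy X;
  frob_r : forall X, idm X ** copy X >> assocI X X X >> cocopy X ** idm X = cocopy X >> copy X;
  special : forall X, copy X >> cocopy X = idm X;
  adj_copy_unit : forall X, idm X ⊑ copy X >> cocopy X;
  adj_copy_counit : forall X, cocopy X >> copy X ⊑ idm (X ⊗ X);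
  adj_disc_unit : forall X, idm X ⊑ disc X >> codisc X;
  adj_disc_counit : forall X, codisc X >> disc X ⊑ idm ounit;
  lax_copy : forall X Y (c : Hom X Y), c >> copy Y ⊑ copy X >> c ** c;
  lax_disc : forall X Y (c : Hom X Y), c >> disc Y ⊑ disc X;
  copy_tens : forall X Y, copy (X ⊗ Y) = copy X ** copy Y >> exch X X Y Y;
  disc_tens : forall X Y, disc (X ⊗ Y) = disc X ** disc Y >> lunit ounit;
  copy_unit : copy ounit = lunitI ounit;
  disc_unit : disc ounit = idm ounit;
  cocopy_tens : forall X Y, cocopy (X ⊗ Y) = exch X Y X Y >> cocopy X ** cocopy Y;
  codisc_tens : forall X Y, codisc (X ⊗ Y) = lunitI ounit >> codisc X ** codisc Y;
  cocopy_unit : cocopy ounit = lunit ounit;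
  codisc_unit : codisc ounit = idm ounit
}.

Definition is_map {Ob Hom} {S : SMCData Ob Hom} {B : CBData Ob Hom}
  {X Y : Ob} (f : Hom X Y) : Prop :=
  f >> copy Y = copy X >> f ** f /\ f >> disc Y = disc X.

Class BoolData (Ob : Type) (Hom : Ob -> Ob -> Type) := {
  bmeet : forall {X Y : Ob}, Hom X Y -> Hom X Y -> Hom X Y;
  bjoin : forall {X Y : Ob}, Hom X Y -> Hom X Y -> Hom X Y;
  bneg : forall {X Y : Ob}, Hom X Y -> Hom X Y;
  btop : forall X Y : Ob, Hom X Y;
  bbot : forall X Y : Ob, Hom X Y
}.

Class PeirceLaws (Ob : Type) (Hom : Ob -> Ob -> Type)
  {S : SMCData Ob Hom} {B : CBData Ob Hom} {D : BoolData Ob Hom} : Prop := {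
  pb_cb : CBLaws Ob Hom;
  meet_lb1 : forall X Y (f g : Hom X Y), bmeet f g ⊑ f;
  meet_lb2 : forall X Y (f g : Hom X Y), bmeet f g ⊑ g;
  meet_glb : forall X Y (f g h : Hom X Y), h ⊑ f -> h ⊑ g -> h ⊑ bmeet f g;
  join_ub1 : forall X Y (f g : Hom X Y), f ⊑ bjoin f g;
  join_ub2 : forall X Y (f g : Hom X Y), g ⊑ bjoin f g;
  join_lub : forall X Y (f g h : Hom X Y), f ⊑ h -> g ⊑ h -> bjoin f g ⊑ h;
  top_max : forall X Y (f : Hom X Y), f ⊑ btop X Y;
  bot_min : forall X Y (f : Hom X Y), bbot X Y ⊑ f;
  meet_join_distr : forall X Y (f g h : Hom X Y),
      bmeet f (bjoin g h) = bjoin (bmeet f g) (bmeet f h);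
  neg_meet : forall X Y (f : Hom X Y), bmeet f (bneg f) = bbot X Y;
  neg_join : forall X Y (f : Hom X Y), bjoin f (bneg f) = btop X Y;
  map_neg : forall X Y Z (f : Hom X Y) (c : Hom Y Z),
      is_map f -> f >> bneg c = bneg (f >> c)
}.

Definition dcomp {Ob Hom} {S : SMCData Ob Hom} {D : BoolData Ob Hom}
  {X Y Z : Ob} (a : Hom X Y) (b : Hom Y Z) : Hom X Z :=
  bneg (bneg a >> bneg b).

Notation "a >>* b" := (dcomp a b) (at level 40, left associativity).

From Stdlib Require Import Setoid.

(* In a cartesian bicategory the intersection [copy; (a ⊗ b); cocopy] is the meet of
   the homset, and the Frobenius law gives every arrow a converse a° satisfying the
   modular laws (a;b) ∩ c ≤ a;(b ∩ a°;c) and (a°;s) ∩ q ≤ a°;((a;q) ∩ s).  In a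
   peircean bicategory discarding is a map, so it commutes with negation and f;⊥ ≤ ⊥.
   The second modular law gives the Schröder rule c°;¬(c;d) ≤ ¬d, and the first one,
   through x ≤ ¬y <-> x ∧ y ≤ ⊥, gives both inequalities, e.g.
     c;¬(¬d;¬e) ∧ ¬(c;d);¬e ≤ c;(¬(¬d;¬e) ∧ c°;¬(c;d);¬e) ≤ c;(¬(¬d;¬e) ∧ ¬d;¬e) ≤ ⊥. *)

Existing Instance cb_smc.
Existing Instance pb_cb.

Arguments comp_assoc {_ _ _ _ X Y Z W}.
Arguments comp_idl {_ _ _ _ X Y}.
Arguments comp_idr {_ _ _ _ X Y}.
Arguments assoc_nat {_ _ _ _ X Y Z X' Y' Z'}.
Arguments lunit_nat {_ _ _ _ X Y}.
Arguments sym_nat {_ _ _ _ X Y X' Y'}.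

Section Reassociation.
Context {Ob : Type} {Hom : Ob -> Ob -> Type} {S : SMCData Ob Hom} {L : SMCLaws Ob Hom}.

Lemma reassoc {A X Y C} (f : Hom A X) (g : Hom X Y) (r : Hom A Y) (k : Hom Y C) :
  f >> g = r -> f >> (g >> k) = r >> k.
Proof. intros <-; apply eq_sym, comp_assoc. Qed.

Lemma comp_htens {X Y Z X' Y' Z'} (f : Hom X Y) (g : Hom Y Z) (f' : Hom X' Y') (g' : Hom Y' Z') :
  f ** f' >> g ** g' = (f >> g) ** (f' >> g').
Proof. symmetry; apply htens_comp. Qed.

Lemma comp_htens_assoc {X Y Z X' Y' Z' C} (f : Hom X Y) (g : Hom Y Z) (f' : Hom X' Y')
  (g' : Hom Y' Z') (k : Hom _ C) :
  f ** f' >> (g ** g' >> k) = (f >> g) ** (f' >> g') >> k.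
Proof. apply reassoc, comp_htens. Qed.

End Reassociation.

Ltac norm := repeat rewrite comp_assoc; repeat rewrite comp_idl; repeat rewrite comp_idr.
Ltac fuse := repeat (rewrite comp_htens_assoc || rewrite comp_htens); norm.

Section Monoidal.
Context {Ob : Type} {Hom : Ob -> Ob -> Type} {S : SMCData Ob Hom} {L : SMCLaws Ob Hom}.

Lemma comp_mono_l {X Y Z} (f : Hom X Y) (g g' : Hom Y Z) : g ⊑ g' -> f >> g ⊑ f >> g'.
Proof. intro; apply comp_mono; [apply hle_refl | assumption]. Qed.

Lemma comp_mono_r {X Y Z} (f f' : Hom X Y) (g : Hom Y Z) : f ⊑ f' -> f >> g ⊑ f' >> g.
Proof. intro; apply comp_mono; [assumption | apply hle_refl]. Qed.

Lemma htens_mono_l {X Y X' Y'} (f : Hom X Y) (g g' : Hom X' Y') : g ⊑ g' -> f ** g ⊑ f ** g'.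
Proof. intro; apply htens_mono; [apply hle_refl | assumption]. Qed.

Lemma htens_mono_r {X Y X' Y'} (f f' : Hom X Y) (g : Hom X' Y') : f ⊑ f' -> f ** g ⊑ f' ** g.
Proof. intro; apply htens_mono; [assumption | apply hle_refl]. Qed.

Lemma hle_of_eq {X Y} (f g : Hom X Y) : f = g -> f ⊑ g.
Proof. intros ->; apply hle_refl. Qed.

Lemma htens_split_l {X Y X' Y'} (f : Hom X Y) (g : Hom X' Y') : f ** g = f ** idm _ >> idm _ ** g.
Proof. rewrite comp_htens; norm; reflexivity. Qed.

Lemma htens_split_r {X Y X' Y'} (f : Hom X Y) (g : Hom X' Y') : f ** g = idm _ ** g >> f ** idm _.
Proof. rewrite comp_htens; norm; reflexivity. Qed.

Lemma idm_htens_comp {X Y Z W} (x : Hom Y Z) (y : Hom Z W) :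
  idm X ** (x >> y) = idm X ** x >> idm X ** y.
Proof. rewrite comp_htens, comp_idl; reflexivity. Qed.

Lemma htens_idm_comp {X Y Z W} (x : Hom Y Z) (y : Hom Z W) :
  (x >> y) ** idm X = x ** idm X >> y ** idm X.
Proof. rewrite comp_htens, comp_idl; reflexivity. Qed.

Lemma iso_cancel_l {X Y Z} (u : Hom X Y) (v : Hom Y X) (x y : Hom Y Z) :
  v >> u = idm Y -> u >> x = u >> y -> x = y.
Proof.
  intros Hvu Hxy.
  rewrite <- (comp_idl x), <- (comp_idl y), <- Hvu, !comp_assoc, Hxy; reflexivity.
Qed.

Lemma iso_cancel_r {X Y Z} (u : Hom Y Z) (v : Hom Z Y) (x y : Hom X Y) :
  u >> v = idm Y -> x >> u = y >> u -> x = y.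
Proof.
  intros Huv Hxy.
  rewrite <- (comp_idr x), <- (comp_idr y), <- Huv, <- !comp_assoc, Hxy; reflexivity.
Qed.

Lemma idm_htens_iso {X Y Z} (u : Hom Y Z) (v : Hom Z Y) :
  u >> v = idm Y -> idm X ** u >> idm X ** v = idm (X ⊗ Y).
Proof. intro H; rewrite comp_htens, H, comp_idl, htens_id; reflexivity. Qed.

Lemma htens_idm_iso {X Y Z} (u : Hom Y Z) (v : Hom Z Y) :
  u >> v = idm Y -> u ** idm X >> v ** idm X = idm (Y ⊗ X).
Proof. intro H; rewrite comp_htens, H, comp_idl, htens_id; reflexivity. Qed.

Lemma assocI_nat {X Y Z X' Y' Z'} (f : Hom X X') (g : Hom Y Y') (h : Hom Z Z') :
  assocI X Y Z >> f ** g ** h = f ** (g ** h) >> assocI X' Y' Z'.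
Proof.
  apply (iso_cancel_r (assoc X' Y' Z') (assocI X' Y' Z')); [apply assoc_iso1 |].
  rewrite !comp_assoc, assoc_iso2, comp_idr, assoc_nat, <- comp_assoc, assoc_iso2, comp_idl.
  reflexivity.
Qed.

Lemma lunitI_nat {X Y} (f : Hom X Y) : lunitI X >> idm ounit ** f = f >> lunitI Y.
Proof.
  apply (iso_cancel_r (lunit Y) (lunitI Y)); [apply lunit_iso1 |].
  rewrite !comp_assoc, lunit_iso2, comp_idr, lunit_nat, <- comp_assoc, lunit_iso2, comp_idl.
  reflexivity.
Qed.

Lemma runitI_nat {X Y} (f : Hom X Y) : runitI X >> f ** idm ounit = f >> runitI Y.
Proof.
  apply (iso_cancel_r (runit Y) (runitI Y)); [apply runit_iso1 |].
  rewrite !comp_assoc, runit_iso2, comp_idr, runit_nat, <- comp_assoc, runit_iso2, comp_idl.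
  reflexivity.
Qed.

Lemma idm_ounit_htens_inj {Z W} (f g : Hom Z W) : idm ounit ** f = idm ounit ** g -> f = g.
Proof.
  intro H.
  assert (E : forall h : Hom Z W, h = lunitI Z >> (idm ounit ** h >> lunit W)).
  { intro h. rewrite lunit_nat, <- comp_assoc, lunit_iso2, comp_idl; reflexivity. }
  rewrite (E f), (E g), H; reflexivity.
Qed.

Lemma pentagon_assocI_l W X Y Z :
  assocI (W ⊗ X) Y Z >> (assoc W X Y ** idm Z >> assoc W (X ⊗ Y) Z)
  = assoc W X (Y ⊗ Z) >> idm W ** assocI X Y Z.
Proof.
  apply (iso_cancel_r (idm W ** assoc X Y Z) (idm W ** assocI X Y Z));
    [apply idm_htens_iso, assoc_iso1 |].
  rewrite !comp_assoc, (idm_htens_iso _ _ (assoc_iso2 X Y Z)), comp_idr.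
  apply (iso_cancel_l (assoc (W ⊗ X) Y Z) (assocI (W ⊗ X) Y Z)); [apply assoc_iso2 |].
  rewrite <- comp_assoc, assoc_iso1, comp_idl, pentagon; norm; reflexivity.
Qed.

Lemma pentagon_assocI_r W X Y Z :
  idm W ** assoc X Y Z >> assocI W X (Y ⊗ Z)
  = assocI W (X ⊗ Y) Z >> (assocI W X Y ** idm Z >> assoc (W ⊗ X) Y Z).
Proof.
  apply (iso_cancel_r (assoc W X (Y ⊗ Z)) (assocI W X (Y ⊗ Z))); [apply assoc_iso1 |].
  rewrite !comp_assoc, assoc_iso2, comp_idr, pentagon; norm.
  rewrite (reassoc _ _ _ _ (htens_idm_iso _ _ (assoc_iso2 W X Y))); norm.
  rewrite <- comp_assoc, assoc_iso2, comp_idl; reflexivity.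
Qed.

Lemma assoc_lunit X Y : assoc ounit X Y >> lunit (X ⊗ Y) = lunit X ** idm Y.
Proof.
  apply idm_ounit_htens_inj.
  apply (iso_cancel_l (assoc ounit (ounit ⊗ X) Y) (assocI ounit (ounit ⊗ X) Y));
    [apply assoc_iso2 |].
  apply (iso_cancel_l (assoc ounit ounit X ** idm Y) (assocI ounit ounit X ** idm Y));
    [apply htens_idm_iso, assoc_iso2 |].
  transitivity (assoc (ounit ⊗ ounit) X Y >> runit ounit ** idm (X ⊗ Y)).
  - rewrite idm_htens_comp, <- !comp_assoc, <- pentagon, !comp_assoc, triangle; reflexivity.
  - rewrite <- assoc_nat, <- comp_assoc, <- htens_idm_comp, triangle, <- htens_id, <- assoc_nat.
    reflexivity.
Qed.

End Monoidal.

Section Cartesian.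
Context {Ob : Type} {Hom : Ob -> Ob -> Type} {S : SMCData Ob Hom} {B : CBData Ob Hom}
  {C : CBLaws Ob Hom}.

Lemma copy_disc_r X : copy X >> idm X ** disc X = runitI X.
Proof.
  rewrite <- (comp_idr (copy X >> _)), <- (runit_iso1 X), <- comp_assoc, copy_counitr, comp_idl.
  reflexivity.
Qed.

Lemma copy_disc_l X : copy X >> disc X ** idm X = lunitI X.
Proof.
  rewrite <- (comp_idr (copy X >> _)), <- (lunit_iso1 X), <- comp_assoc, copy_counitl, comp_idl.
  reflexivity.
Qed.

Lemma cocopy_le_disc_r X : cocopy X ⊑ idm X ** disc X >> runit X.
Proof.
  replace (cocopy X) with (cocopy X >> (copy X >> (idm X ** disc X >> runit X))) at 1
    by (rewrite <- (comp_assoc (copy X)), copy_counitr, comp_idr; reflexivity).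
  rewrite <- comp_assoc. eapply hle_trans; [apply comp_mono_r, adj_copy_counit |].
  rewrite comp_idl; apply hle_refl.
Qed.

Lemma cocopy_le_disc_l X : cocopy X ⊑ disc X ** idm X >> lunit X.
Proof.
  replace (cocopy X) with (cocopy X >> (copy X >> (disc X ** idm X >> lunit X))) at 1
    by (rewrite <- (comp_assoc (copy X)), copy_counitl, comp_idr; reflexivity).
  rewrite <- comp_assoc. eapply hle_trans; [apply comp_mono_r, adj_copy_counit |].
  rewrite comp_idl; apply hle_refl.
Qed.

Lemma le_copy_cocopy {X Y} (a : Hom X Y) : a ⊑ copy X >> (a ** a >> cocopy Y).
Proof.
  eapply hle_trans. { rewrite <- (comp_idr a) at 1. apply comp_mono_l, adj_copy_unit. }
  rewrite <- comp_assoc, <- comp_assoc.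
  apply comp_mono_r, lax_copy.
Qed.

Lemma cocopy_comp_le {X Y} (a : Hom X Y) : cocopy X >> a ⊑ a ** a >> cocopy Y.
Proof.
  eapply hle_trans. { apply comp_mono_l, le_copy_cocopy. }
  rewrite <- comp_assoc. eapply hle_trans; [apply comp_mono_r, adj_copy_counit |].
  rewrite comp_idl; apply hle_refl.
Qed.

Definition inter {X Y} (a b : Hom X Y) : Hom X Y := copy X >> (a ** b >> cocopy Y).

Lemma inter_lb_l {X Y} (a b : Hom X Y) : inter a b ⊑ a.
Proof.
  unfold inter. eapply hle_trans. { apply comp_mono_l, comp_mono_l, cocopy_le_disc_r. }
  rewrite (reassoc _ _ _ _ (comp_htens _ _ _ _)); norm.
  eapply hle_trans. { apply comp_mono_l, comp_mono_r, htens_mono_l, lax_disc. }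
  rewrite (htens_split_r a), !comp_assoc, runit_nat, <- comp_assoc, <- comp_assoc, copy_counitr.
  norm; apply hle_refl.
Qed.

Lemma inter_lb_r {X Y} (a b : Hom X Y) : inter a b ⊑ b.
Proof.
  unfold inter. eapply hle_trans. { apply comp_mono_l, comp_mono_l, cocopy_le_disc_l. }
  rewrite (reassoc _ _ _ _ (comp_htens _ _ _ _)); norm.
  eapply hle_trans. { apply comp_mono_l, comp_mono_r, htens_mono_r, lax_disc. }
  rewrite (htens_split_l _ b), !comp_assoc, lunit_nat, <- comp_assoc, <- comp_assoc, copy_counitl.
  norm; apply hle_refl.
Qed.

Lemma inter_glb {X Y} (a b c : Hom X Y) : c ⊑ a -> c ⊑ b -> c ⊑ inter a b.
Proof.
  intros Ha Hb. eapply hle_trans; [apply le_copy_cocopy |].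
  apply comp_mono_l, comp_mono_r, htens_mono; assumption.
Qed.

Lemma inter_comm {X Y} (a b : Hom X Y) : inter a b = inter b a.
Proof.
  unfold inter. rewrite <- (copy_cocomm X) at 1; norm.
  rewrite (reassoc _ _ _ _ (eq_sym (sym_nat b a))); norm.
  rewrite cocopy_comm; reflexivity.
Qed.

Lemma copy_frobenius X :
  copy X = runitI X >> (idm X ** codisc X >> (idm X ** copy X >> (assocI X X X >> cocopy X ** idm X))).
Proof.
  pose proof (frob_r X) as H. rewrite comp_assoc in H.
  rewrite H, <- !comp_assoc, cocopy_unitr, comp_idl; reflexivity.
Qed.

Lemma cocopy_frobenius_l X :
  cocopy X = copy X ** idm X >> (assoc X X X >> (idm X ** (cocopy X >> disc X) >> runit X)).
Proof.
  pose proof (frob_l X) as H. rewrite comp_assoc in H.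
  rewrite idm_htens_comp; norm.
  rewrite <- (comp_assoc (assoc X X X)), <- (comp_assoc (copy X ** idm X)), H; norm.
  rewrite <- (comp_assoc (copy X)), copy_counitr, comp_idr; reflexivity.
Qed.

Lemma cocopy_frobenius_r X :
  cocopy X = idm X ** copy X >> (assocI X X X >> ((cocopy X >> disc X) ** idm X >> lunit X)).
Proof.
  pose proof (frob_r X) as H. rewrite comp_assoc in H.
  rewrite htens_idm_comp; norm.
  rewrite <- (comp_assoc (assocI X X X)), <- (comp_assoc (idm X ** copy X)), H; norm.
  rewrite <- (comp_assoc (copy X)), copy_counitl, comp_idr; reflexivity.
Qed.

Definition graph {X Y} (a : Hom X Y) : Hom ounit (Y ⊗ X) := codisc X >> (copy X >> a ** idm X).

(* The converse bends both wires of [a] with the Frobenius cup [codisc; copy] and cap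
   [cocopy; disc]; the unit is introduced as [copy; id ⊗ disc] rather than [runitI] so
   that coassociativity of [copy] applies in [copy_conv]. *)
Definition conv {X Y} (a : Hom X Y) : Hom Y X :=
  copy Y >> (idm Y ** (disc Y >> graph a) >>
    (assocI Y Y X >> ((cocopy Y >> disc Y) ** idm X >> lunit X))).

Lemma copy_conv {X Y} (a : Hom X Y) :
  copy Y >> idm Y ** conv a
  = copy Y >> (idm Y ** (disc Y >> graph a) >> (assocI Y Y X >> cocopy Y ** idm X)).
Proof.
  set (t := disc Y >> graph a).
  transitivity (copy Y >> (copy Y ** t >> (assoc Y Y (Y ⊗ X) >> (idm Y ** assocI Y Y X >>
     (idm Y ** ((cocopy Y >> disc Y) ** idm X) >> idm Y ** lunit X))))).
  - unfold conv; fold t. rewrite !idm_htens_comp.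
    rewrite <- (comp_assoc (copy Y)), <- copy_coassoc; norm.
    rewrite (reassoc _ _ _ _ (eq_sym (assoc_nat (idm Y) (idm Y) t))); norm.
    rewrite (comp_htens_assoc (copy Y) _ (idm Y) t), htens_id; norm; reflexivity.
  - assert (Hfrob : cocopy Y ** idm X = copy Y ** idm Y ** idm X >> (assoc Y Y Y ** idm X >>
       (idm Y ** (cocopy Y >> disc Y) ** idm X >> runit Y ** idm X)))
      by (rewrite <- !htens_idm_comp, <- cocopy_frobenius_l; reflexivity).
    rewrite Hfrob; norm.
    rewrite (reassoc _ _ _ _ (assocI_nat (copy Y) (idm Y) (idm X))); norm.
    rewrite (comp_htens_assoc (idm Y) (copy Y) t), htens_id; norm.
    rewrite <- triangle, (reassoc _ _ _ _ (assoc_nat _ _ _)); norm.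
    rewrite (reassoc _ _ _ _ (eq_sym (pentagon_assocI_l Y Y Y X))); norm; reflexivity.
Qed.

Lemma copy_htens_le_conv {X Y} (a : Hom X Y) :
  copy X >> a ** idm X ⊑ a >> (copy Y >> idm Y ** conv a).
Proof.
  rewrite copy_conv.
  apply hle_trans with (runitI X >> (idm X ** codisc X >> (idm X ** copy X >>
      (a ** (a ** idm X) >> (assocI Y Y X >> cocopy Y ** idm X))))).
  - rewrite (copy_frobenius X) at 1; norm.
    apply comp_mono_l, comp_mono_l, comp_mono_l.
    rewrite (reassoc _ _ _ _ (eq_sym (assocI_nat a a (idm X)))); norm.
    apply comp_mono_l. rewrite !comp_htens; norm. apply htens_mono_r, cocopy_comp_le.
  - apply hle_of_eq. unfold graph. rewrite idm_htens_comp; norm.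
    rewrite (reassoc _ _ _ _ (copy_disc_r Y)), (reassoc _ _ _ _ (eq_sym (runitI_nat a))).
    norm; fuse; reflexivity.
Qed.

Lemma assocI_cocopy_frobenius X Y :
  assocI Y Y X >> cocopy Y ** idm X
  = idm Y ** (copy Y ** idm X >> assoc Y Y X) >> (assocI Y Y (Y ⊗ X) >>
      ((cocopy Y >> disc Y) ** idm (Y ⊗ X) >> lunit (Y ⊗ X))).
Proof.
  rewrite idm_htens_comp; norm.
  rewrite (reassoc _ _ _ _ (pentagon_assocI_r Y Y Y X)); norm.
  rewrite (reassoc _ _ _ _ (eq_sym (assocI_nat (idm Y) (copy Y) (idm X)))); norm.
  rewrite <- (htens_id Y X).
  rewrite (reassoc _ _ _ _ (eq_sym (assoc_nat (cocopy Y >> disc Y) (idm Y) (idm X)))); norm.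
  rewrite assoc_lunit, (cocopy_frobenius_r Y) at 1.
  rewrite !htens_idm_comp; norm; reflexivity.
Qed.

Lemma graph_copy_le {X Y} (a : Hom X Y) :
  graph a >> (copy Y ** idm X >> assoc Y Y X) ⊑ graph a >> idm Y ** (copy X >> a ** idm X).
Proof.
  unfold graph; norm. apply comp_mono_l.
  rewrite (comp_htens_assoc a (copy Y) (idm X) (idm X)); norm.
  apply hle_trans with (copy X >> ((copy X >> a ** a) ** idm X >> assoc Y Y X)).
  { apply comp_mono_l, comp_mono_r, htens_mono_r, lax_copy. }
  apply hle_of_eq. rewrite htens_idm_comp; norm.
  rewrite assoc_nat, <- !comp_assoc, copy_coassoc.
  norm; fuse; reflexivity.
Qed.

Lemma copy_conv_le {X Y} (a : Hom X Y) :
  copy Y >> idm Y ** conv a ⊑ conv a >> (copy X >> a ** idm X).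
Proof.
  rewrite copy_conv, assocI_cocopy_frobenius; norm.
  rewrite (comp_htens_assoc (idm Y) (idm Y) (disc Y >> graph a)); norm.
  apply hle_trans with (copy Y >>
    (idm Y ** (disc Y >> (graph a >> idm Y ** (copy X >> a ** idm X))) >>
     (assocI Y Y (Y ⊗ X) >> ((cocopy Y >> disc Y) ** idm (Y ⊗ X) >> lunit (Y ⊗ X))))).
  { apply comp_mono_l, comp_mono_r, htens_mono_l, comp_mono_l. norm; apply graph_copy_le. }
  apply hle_of_eq. unfold conv; norm.
  rewrite <- (lunit_nat (copy X >> a ** idm X)).
  rewrite (comp_htens_assoc (cocopy Y >> disc Y) (idm ounit) (idm X)); norm.
  rewrite <- (comp_assoc (disc Y)), (idm_htens_comp (disc Y >> graph a)); norm.
  rewrite (reassoc _ _ _ _ (eq_sym (assocI_nat (idm Y) (idm Y) (copy X >> a ** idm X)))); norm.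
  rewrite (comp_htens_assoc (idm Y ** idm Y)), htens_id; norm; reflexivity.
Qed.

Lemma inter_comp_le {X Y Z} (a : Hom X Y) (b : Hom Y Z) (c : Hom X Z) :
  inter (a >> b) c ⊑ a >> inter b (conv a >> c).
Proof.
  unfold inter.
  rewrite <- (comp_idl c) at 1. rewrite <- comp_htens; norm.
  rewrite <- comp_assoc. eapply hle_trans; [apply comp_mono_r, copy_htens_le_conv |].
  norm; fuse; apply hle_refl.
Qed.

Lemma inter_conv_comp_le {X Y Z} (p : Hom X Y) (s : Hom X Z) (q : Hom Y Z) :
  inter (conv p >> s) q ⊑ conv p >> inter (p >> q) s.
Proof.
  rewrite inter_comm. unfold inter.
  rewrite <- (comp_idl q) at 1. rewrite <- comp_htens; norm.
  rewrite <- comp_assoc. eapply hle_trans; [apply comp_mono_r, copy_conv_le |].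
  norm; fuse; apply hle_refl.
Qed.
End Cartesian.

Section Peircean.
Context {Ob : Type} {Hom : Ob -> Ob -> Type} {S : SMCData Ob Hom} {B : CBData Ob Hom}
  {D : BoolData Ob Hom} {P : PeirceLaws Ob Hom}.

Lemma meet_comm {X Y} (f g : Hom X Y) : bmeet f g = bmeet g f.
Proof. apply hle_antisym; apply meet_glb; first [apply meet_lb2 | apply meet_lb1]. Qed.

Lemma meet_top_r {X Y} (f : Hom X Y) : bmeet f (btop X Y) = f.
Proof. apply hle_antisym; [apply meet_lb1 | apply meet_glb; [apply hle_refl | apply top_max]]. Qed.

Lemma meet_mono_r {X Y} (f g g' : Hom X Y) : g ⊑ g' -> bmeet f g ⊑ bmeet f g'.
Proof.
  intro; apply meet_glb; [apply meet_lb1 | eapply hle_trans; [apply meet_lb2 | assumption]].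
Qed.

Lemma meet_neg_l {X Y} (f : Hom X Y) : bmeet (bneg f) f = bbot X Y.
Proof. rewrite meet_comm; apply neg_meet. Qed.

Lemma hle_neg {X Y} (x y : Hom X Y) : bmeet x y ⊑ bbot X Y -> x ⊑ bneg y.
Proof.
  intro H. rewrite <- (meet_top_r x), <- (neg_join _ _ y), meet_join_distr.
  apply join_lub; [eapply hle_trans; [exact H | apply bot_min] | apply meet_lb2].
Qed.

Lemma bneg_involutive {X Y} (x : Hom X Y) : bneg (bneg x) = x.
Proof.
  apply hle_antisym.
  - rewrite <- (meet_top_r (bneg (bneg x))), <- (neg_join _ _ x), meet_join_distr.
    apply join_lub; [apply meet_lb2 |].
    rewrite meet_neg_l; apply bot_min.
  - apply hle_neg. rewrite neg_meet; apply hle_refl.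
Qed.

Lemma bneg_top X Y : bneg (btop X Y) = bbot X Y.
Proof. rewrite <- (neg_meet _ _ (btop X Y)), meet_comm, meet_top_r; reflexivity. Qed.

Lemma meet_inter {X Y} (a b : Hom X Y) : bmeet a b = inter a b.
Proof.
  apply hle_antisym.
  - apply inter_glb; [apply meet_lb1 | apply meet_lb2].
  - apply meet_glb; [apply inter_lb_l | apply inter_lb_r].
Qed.

Lemma disc_is_map X : is_map (disc X).
Proof.
  split.
  - rewrite copy_unit, (htens_split_l (disc X)), <- comp_assoc, copy_disc_l, lunitI_nat.
    reflexivity.
  - rewrite disc_unit, comp_idr; reflexivity.
Qed.

Lemma disc_top X Z : disc X >> btop ounit Z = btop X Z.
Proof.
  apply hle_antisym; [apply top_max |].
  eapply hle_trans. { rewrite <- (comp_idl (btop X Z)) at 1. apply comp_mono_r, adj_disc_unit. }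
  norm; apply comp_mono_l, top_max.
Qed.

Lemma disc_bot X Z : disc X >> bbot ounit Z = bbot X Z.
Proof. rewrite <- !bneg_top, map_neg by apply disc_is_map. rewrite disc_top; reflexivity. Qed.

Lemma comp_bot {X Y Z} (f : Hom X Y) : f >> bbot Y Z ⊑ bbot X Z.
Proof.
  rewrite <- (disc_bot Y), <- (disc_bot X), <- comp_assoc. apply comp_mono_r, lax_disc.
Qed.

Lemma conv_comp_neg_le {X Y Z} (c : Hom X Y) (d : Hom Y Z) : conv c >> bneg (c >> d) ⊑ bneg d.
Proof.
  apply hle_neg. rewrite meet_inter.
  eapply hle_trans; [apply inter_conv_comp_le |].
  rewrite <- meet_inter, neg_meet. apply comp_bot.
Qed.

Lemma meet_comp_neg_bot {X Y W} (c : Hom X Y) (a : Hom Y W) (y : Hom X W) :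
  conv c >> y ⊑ a -> bmeet (c >> bneg a) y ⊑ bbot X W.
Proof.
  intro H. rewrite meet_inter.
  eapply hle_trans; [apply inter_comp_le |].
  eapply hle_trans; [| apply (comp_bot c)]. apply comp_mono_l.
  rewrite <- meet_inter, <- (meet_neg_l a). apply meet_mono_r, H.
Qed.

Lemma comp_dcomp_le {X Y Z W} (c : Hom X Y) (d : Hom Y Z) (e : Hom Z W) :
  c >> (d >>* e) ⊑ (c >> d) >>* e.
Proof.
  apply hle_neg, meet_comp_neg_bot.
  rewrite <- comp_assoc. apply comp_mono_r, conv_comp_neg_le.
Qed.

Lemma dcomp_comp_le {X Y Z W} (c : Hom X Y) (d : Hom Y Z) (e : Hom Z W) :
  (c >>* d) >> e ⊑ c >>* (d >> e).
Proof.
  apply hle_neg. rewrite meet_comm. apply meet_comp_neg_bot.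
  rewrite <- comp_assoc. apply comp_mono_r.
  rewrite <- (bneg_involutive d) at 2. apply conv_comp_neg_le.
Qed.

End Peircean.

Theorem lemma65 (Ob : Type) (Hom : Ob -> Ob -> Type)
  (S : SMCData Ob Hom) (B : CBData Ob Hom) (D : BoolData Ob Hom)
  (P : PeirceLaws Ob Hom)
  (X Y Z W : Ob) (c : Hom X Y) (d : Hom Y Z) (e : Hom Z W) :
  c >> (d >>* e) ⊑ (c >> d) >>* e /\ (c >>* d) >> e ⊑ c >>* (d >> e).
Proof. split; [apply comp_dcomp_le | apply dcomp_comp_le]. Qed.
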